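(* Let $I=(x_1,\ldots,x_n)$ be a list of items with sizes $x_i\in(1/3,1]$, and let $I'=(x'_1,\ldots,x'_n)$ be a list of items with sizes in $(0,1]$ obtained from $I$ by increasing the sizes of one or more items, i.e. $x'_i\ge x_i$ for all $i$. Then $\mathrm{BF}(I)\le \mathrm{BF}(I')$.
   Context: The online algorithm Best Fit (BF) processes a list of items with sizes in $(0,1]$ in the given order and packs the current item into the fullest bin (largest current load, i.e. sum of sizes of items in it) into which it fits without exceeding total size $1$, opening a new unit-capacity bin if it fits into no existing bin; items are never moved. $\mathrm{BF}(I)$ denotes the number of bins Best Fit uses on list $I$. *)

From Stdlib Require Import Reals Lra List.
Import ListNotations.
Open Scope R_scope.

(* A packing state is the list of current bin loads (sum of item sizes in
   each bin), in the order the bins were opened.  All bins have capacity 1. *)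

(* [best_bin loads x] returns [Some i] where [i] is the index of a bin of
   maximal load among those bins into which [x] fits (load + x <= 1);
   ties are broken in favour of the earliest opened bin. *)
Fixpoint best_bin_aux (loads : list R) (x : R) (k : nat)
    (acc : option (nat * R)) : option (nat * R) :=
  match loads with
  | [] => acc
  | l :: ls =>
      let acc' :=
        if Rle_dec (l + x) 1 then
          match acc with
          | None => Some (k, l)
          | Some (j, lj) => if Rlt_dec lj l then Some (k, l) else acc
          end
        else acc in
      best_bin_aux ls x (S k) acc'
  end.

Definition best_bin (loads : list R) (x : R) : option nat :=
  option_map fst (best_bin_aux loads x 0 None).

Fixpoint add_at (loads : list R) (i : nat) (x : R) : list R :=
  match loads, i with
  | [], _ => []
  | l :: ls, O => (l + x) :: ls
  | l :: ls, S i' => l :: add_at ls i' x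
  end.

Definition bf_step (loads : list R) (x : R) : list R :=
  match best_bin loads x with
  | Some i => add_at loads i x
  | None => loads ++ [x]
  end.

Definition bf_loads (I : list R) : list R := fold_left bf_step I [].

Definition BF (I : list R) : nat := length (bf_loads I).

From Stdlib Require Import Reals Lra Lia List Permutation.
Import ListNotations.
Open Scope R_scope.

(** Since every item of [I] exceeds 1/3, so does every item of [I'], and in
    both runs each bin ends up with one or two items.  Hence
    [2 BF = n + s], where [n] is the number of items and [s] the number of
    bins holding a single item, and it suffices to show [s <= s'].  Two
    single-item bins never fit together: the later item would have gone into
    the earlier bin.  Using this, one shows by induction along the two runs
    that the single-item loads of the [I']-run dominate those of the [I]-run:
    for every threshold [t], at least as many of them exceed [t]. *)

Definition gtb (t y : R) : bool := if Rlt_dec t y then true else false.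

Lemma gtbP t y : Bool.reflect (t < y) (gtb t y).
Proof. unfold gtb; destruct (Rlt_dec t y); constructor; auto. Qed.

Definition count_gt (t : R) (S : list R) : nat := length (filter (gtb t) S).

Lemma count_gt_cons t a S :
  count_gt t (a :: S) = ((if gtb t a then 1 else 0) + count_gt t S)%nat.
Proof. unfold count_gt; simpl; destruct (gtb t a); reflexivity. Qed.

Lemma count_gt_snoc t S x :
  count_gt t (S ++ [x]) = (count_gt t S + if gtb t x then 1 else 0)%nat.
Proof.
  unfold count_gt; rewrite filter_app, length_app; simpl.
  destruct (gtb t x); reflexivity.
Qed.

Lemma count_gt_perm t S S' : Permutation S S' -> count_gt t S = count_gt t S'.
Proof.
  induction 1 as [| a S S' _ IH | a b S | S S' S'' _ IH _ IH'];
    rewrite ?count_gt_cons; lia.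
Qed.

Lemma count_gt_all t S : (forall y, In y S -> t < y) -> count_gt t S = length S.
Proof.
  intros H; unfold count_gt; rewrite forallb_filter_id; [reflexivity|].
  apply forallb_forall; intros y Hy.
  destruct (gtbP t y) as [|Hn]; [reflexivity | contradiction (Hn (H y Hy))].
Qed.

Lemma count_gt_le_length t S : (count_gt t S <= length S)%nat.
Proof. apply filter_length_le. Qed.

Lemma count_gt_le t t' S :
  (forall y, In y S -> t < y -> t' < y) -> (count_gt t S <= count_gt t' S)%nat.
Proof.
  induction S as [|a S IH]; intros H; [apply le_n|].
  rewrite !count_gt_cons.
  assert (IH' := IH (fun y Hy => H y (or_intror Hy))).
  destruct (gtbP t a) as [Ha|Ha], (gtbP t' a) as [Ha'|Ha']; try lia.
  exfalso; apply Ha', H; [left|]; auto.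
Qed.

Lemma count_gt_lt t t' S y :
  (forall z, In z S -> t < z -> t' < z) -> In y S -> t' < y <= t ->
  (count_gt t S < count_gt t' S)%nat.
Proof.
  induction S as [|a S IH]; intros H Hy Hyt; [destruct Hy|].
  rewrite !count_gt_cons.
  assert (H' : forall z, In z S -> t < z -> t' < z) by (intros; apply H; auto with datatypes).
  destruct Hy as [<-|Hy].
  - assert (Hle := count_gt_le t t' S H').
    destruct (gtbP t a), (gtbP t' a); lra || lia.
  - assert (Hlt := IH H' Hy Hyt).
    destruct (gtbP t a) as [Ha|Ha], (gtbP t' a) as [Ha'|Ha']; try lia.
    exfalso; apply Ha', H; [left|]; auto.
Qed.

Definition dominates (S S' : list R) : Prop :=
  forall t, (count_gt t S <= count_gt t S')%nat.

Lemma dominates_length t S S' :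
  dominates S S' -> (forall y, In y S -> t < y) -> (length S <= length S')%nat.
Proof.
  intros HD Ht; rewrite <- (count_gt_all t S Ht).
  eapply Nat.le_trans; [apply HD | apply count_gt_le_length].
Qed.

Lemma dominates_snoc S S' x x' :
  dominates S S' -> x <= x' -> dominates (S ++ [x]) (S' ++ [x']).
Proof.
  intros HD Hx t; rewrite !count_gt_snoc; specialize (HD t).
  destruct (gtbP t x), (gtbP t x'); lra || lia.
Qed.

Lemma dominates_snoc_r S S' x' : dominates S S' -> dominates S (S' ++ [x']).
Proof. intros HD t; rewrite count_gt_snoc; specialize (HD t); lia. Qed.

Lemma dominates_remove_l S S' l R :
  dominates S S' -> Permutation S (l :: R) -> dominates R S'.
Proof.
  intros HD HP t; specialize (HD t).
  rewrite (count_gt_perm t _ _ HP), count_gt_cons in HD; lia.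
Qed.

Lemma dominates_remove_below S S' l' R' :
  dominates S S' -> Permutation S' (l' :: R') -> (forall y, In y S -> l' < y) ->
  dominates S R'.
Proof.
  intros HD HP Hgt t.
  assert (E := fun u => count_gt_perm u _ _ HP).
  destruct (gtbP t l') as [Ht|Ht].
  - assert (Hl' := HD l'); rewrite (E l'), count_gt_cons, (count_gt_all l' S Hgt) in Hl'.
    destruct (gtbP l' l'); [lra|].
    assert (Hmono : (count_gt l' R' <= count_gt t R')%nat)
      by (apply count_gt_le; intros; lra).
    assert (HS := count_gt_le_length t S); lia.
  - specialize (HD t); rewrite (E t), count_gt_cons in HD.
    destruct (gtbP t l'); [contradiction|lia].
Qed.

Lemma dominates_open_close S S' l' R' x :
  dominates S S' -> Permutation S' (l' :: R') -> (forall y, In y S -> l' < y) ->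
  (forall y, In y R' -> x <= y) -> (length S < length R')%nat ->
  dominates (S ++ [x]) R'.
Proof.
  intros HD HP Hgt Hx Hlen t; rewrite count_gt_snoc.
  destruct (gtbP t x) as [Ht|Ht].
  - rewrite (count_gt_all t R') by (intros y Hy; specialize (Hx y Hy); lra).
    assert (HS := count_gt_le_length t S); lia.
  - rewrite Nat.add_0_r; exact (dominates_remove_below S S' l' R' HD HP Hgt t).
Qed.

(** [l] is the largest load of [S] that is at most [c], while [l' <= c]:
    above a threshold in [[l, l')], [S] loses nothing by raising it to [c],
    whereas [S'] loses at least [l']. *)
Lemma dominates_remove_pair S S' l l' R R' c :
  dominates S S' -> Permutation S (l :: R) -> Permutation S' (l' :: R') ->
  (forall y, In y S -> y <= c -> y <= l) -> l' <= c -> dominates R R'.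
Proof.
  intros HD HP HP' Hmax Hl' t.
  assert (E := count_gt_perm t _ _ HP); assert (E' := count_gt_perm t _ _ HP').
  rewrite count_gt_cons in E, E'.
  assert (HDt := HD t).
  destruct (gtbP t l) as [Hl|Hl], (gtbP t l') as [Htl'|Htl']; try lia.
  assert (HS : (count_gt t S <= count_gt c S)%nat).
  { apply count_gt_le; intros y Hy Hty.
    destruct (Rlt_or_le c y) as [|Hyc]; [assumption|].
    specialize (Hmax y Hy Hyc); lra. }
  assert (HS' : (count_gt c S' < count_gt t S')%nat).
  { apply (count_gt_lt c t S' l'); [intros; lra | | lra].
    exact (Permutation_in _ (Permutation_sym HP') (in_eq l' R')). }
  specialize (HD c); lia.
Qed.

Section OrderedPairs.

Variables (A : Type) (rel : A -> A -> Prop).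

Lemma ForallOrdPairs_snoc l x :
  ForallOrdPairs rel l -> Forall (fun y => rel y x) l -> ForallOrdPairs rel (l ++ [x]).
Proof.
  induction 1 as [|a l Ha _ IH]; intros Hx; simpl.
  - repeat constructor.
  - inversion_clear Hx as [|? ? Hax Hlx].
    constructor; [apply Forall_app; auto | auto].
Qed.

Hypothesis rel_sym : forall a b, rel a b -> rel b a.

Lemma ForallOrdPairs_perm l l' :
  Permutation l l' -> ForallOrdPairs rel l -> ForallOrdPairs rel l'.
Proof.
  induction 1 as [| a l l' HP IH | a b l | l l' l'' _ IH _ IH']; intros H; auto.
  - inversion_clear H as [|? ? Ha Hl].
    constructor; [exact (Permutation_Forall HP Ha) | auto].
  - inversion_clear H as [|? ? Hb Hal]; inversion_clear Hal as [|? ? Ha Hl].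
    inversion_clear Hb as [|? ? Hba Hbl].
    repeat constructor; auto.
Qed.

End OrderedPairs.

Definition best_update (l x : R) (k : nat) (acc : option (nat * R)) : option (nat * R) :=
  if Rle_dec (l + x) 1 then
    match acc with
    | None => Some (k, l)
    | Some (j, lj) => if Rlt_dec lj l then Some (k, l) else acc
    end
  else acc.

Lemma best_bin_aux_cons l L x k acc :
  best_bin_aux (l :: L) x k acc = best_bin_aux L x (S k) (best_update l x k acc).
Proof. reflexivity. Qed.

Lemma best_update_cases l x k acc :
  best_update l x k acc = acc \/ (l + x <= 1 /\ best_update l x k acc = Some (k, l)).
Proof.
  unfold best_update; destruct (Rle_dec (l + x) 1); auto.
  destruct acc as [[j lj]|]; [destruct (Rlt_dec lj l)|]; auto.
Qed.

Lemma best_update_mono l x k j lj :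
  exists i li, best_update l x k (Some (j, lj)) = Some (i, li) /\ lj <= li.
Proof.
  unfold best_update; destruct (Rle_dec (l + x) 1); [destruct (Rlt_dec lj l)|];
    eexists _, _; split; try reflexivity; lra.
Qed.

Lemma best_update_fit l x k acc :
  l + x <= 1 -> exists i li, best_update l x k acc = Some (i, li) /\ l <= li.
Proof.
  intros Hfit; unfold best_update; destruct (Rle_dec (l + x) 1); [|contradiction].
  destruct acc as [[j lj]|]; [destruct (Rlt_dec lj l)|];
    eexists _, _; split; try reflexivity; lra.
Qed.

Lemma best_bin_aux_mono L x k j lj :
  exists i li, best_bin_aux L x k (Some (j, lj)) = Some (i, li) /\ lj <= li.
Proof.
  revert k j lj; induction L as [|l L IH]; intros k j lj.
  - exists j, lj; split; [reflexivity | lra].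
  - rewrite best_bin_aux_cons.
    destruct (best_update_mono l x k j lj) as [j' [lj' [-> Hle]]].
    destruct (IH (S k) j' lj') as [i [li [-> Hle']]].
    exists i, li; split; [reflexivity | lra].
Qed.

Lemma best_bin_aux_max L x k acc y :
  In y L -> y + x <= 1 -> exists i li, best_bin_aux L x k acc = Some (i, li) /\ y <= li.
Proof.
  revert k acc; induction L as [|l L IH]; intros k acc Hy Hfit; [destruct Hy|].
  rewrite best_bin_aux_cons; destruct Hy as [<-|Hy]; [|auto].
  destruct (best_update_fit l x k acc Hfit) as [j [lj [-> Hle]]].
  destruct (best_bin_aux_mono L x (S k) j lj) as [i [li [-> Hle']]].
  exists i, li; split; [reflexivity | lra].
Qed.

Lemma best_bin_aux_origin L x k acc :
  best_bin_aux L x k acc = acc \/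
  exists j, (j < length L)%nat /\ nth j L 0 + x <= 1 /\
            best_bin_aux L x k acc = Some ((k + j)%nat, nth j L 0).
Proof.
  revert k acc; induction L as [|l L IH]; intros k acc; [now left|].
  rewrite best_bin_aux_cons; simpl length.
  destruct (IH (S k) (best_update l x k acc)) as [->|[j [Hj [Hfit ->]]]].
  - destruct (best_update_cases l x k acc) as [->|[Hfit ->]]; [now left|].
    right; exists 0%nat; rewrite Nat.add_0_r; repeat split; auto; lia.
  - right; exists (S j); rewrite Nat.add_succ_r; repeat split; auto; lia.
Qed.

Lemma best_bin_some L x i :
  best_bin L x = Some i ->
  (i < length L)%nat /\ nth i L 0 + x <= 1 /\
  (forall y, In y L -> y + x <= 1 -> y <= nth i L 0).
Proof.
  unfold best_bin; intros H.
  destruct (best_bin_aux_origin L x 0 None) as [E|[j [Hj [Hfit E]]]];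
    rewrite E in H; [discriminate|injection H as <-].
  repeat split; auto.
  intros y Hy Hyfit.
  destruct (best_bin_aux_max L x 0 None y Hy Hyfit) as [i [li [E' Hle]]].
  rewrite E in E'; injection E' as _ <-; exact Hle.
Qed.

Lemma best_bin_none L x : best_bin L x = None -> forall y, In y L -> 1 < y + x.
Proof.
  intros H y Hy; destruct (Rlt_or_le 1 (y + x)) as [|Hfit]; [assumption|].
  destruct (best_bin_aux_max L x 0 None y Hy Hfit) as [i [li [E _]]].
  unfold best_bin in H; rewrite E in H; discriminate.
Qed.

(** Best Fit run on bins tagged with [true] while they hold a single item. *)
Fixpoint add_item_at (P : list (R * bool)) (i : nat) (x : R) : list (R * bool) :=
  match P, i with
  | [], _ => []
  | (l, _) :: P', O => (l + x, false) :: P'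
  | b :: P', S i' => b :: add_item_at P' i' x
  end.

Definition tagged_step (P : list (R * bool)) (x : R) : list (R * bool) :=
  match best_bin (map fst P) x with
  | Some i => add_item_at P i x
  | None => P ++ [(x, true)]
  end.

Definition singles (P : list (R * bool)) : list R := map fst (filter snd P).

Definition tag_ok (b : R * bool) : Prop := if snd b then 1/3 < fst b else 2/3 < fst b.

Lemma map_fst_add_item_at P i x : map fst (add_item_at P i x) = add_at (map fst P) i x.
Proof.
  revert i; induction P as [|[l s] P IH]; intros [|i]; simpl; f_equal; auto.
Qed.

Lemma map_fst_fold_tagged_step I P :
  map fst (fold_left tagged_step I P) = fold_left bf_step I (map fst P).
Proof.
  revert P; induction I as [|x I IH]; intros P; simpl; [reflexivity|].
  rewrite IH; f_equal; unfold tagged_step, bf_step.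
  destruct (best_bin (map fst P) x); [apply map_fst_add_item_at | apply map_app].
Qed.

Lemma length_add_item_at P i x : length (add_item_at P i x) = length P.
Proof. revert i; induction P as [|[l s] P IH]; intros [|i]; simpl; auto. Qed.

Lemma singles_add_item_at P i x l :
  nth i P (0, false) = (l, true) -> Permutation (singles P) (l :: singles (add_item_at P i x)).
Proof.
  revert i; induction P as [|[a s] P IH]; intros [|i] Hn; simpl in Hn;
    try discriminate; unfold singles in *; simpl.
  - injection Hn as -> ->; reflexivity.
  - destruct s; simpl; [|auto].
    eapply perm_trans; [apply perm_skip, (IH i Hn) | apply perm_swap].
Qed.

Lemma singles_snoc P x : singles (P ++ [(x, true)]) = singles P ++ [x].
Proof. unfold singles; rewrite filter_app, map_app; reflexivity. Qed.

Lemma in_singles P y : In y (singles P) -> In (y, true) P.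
Proof.
  unfold singles; intros H; apply in_map_iff in H as [[a s] [<- H]].
  apply filter_In in H as [H Hs]; simpl in Hs; subst s; exact H.
Qed.

Lemma singles_gt P y : Forall tag_ok P -> In y (singles P) -> 1/3 < y.
Proof.
  intros HP Hy; exact (proj1 (Forall_forall _ _) HP _ (in_singles P y Hy)).
Qed.

Lemma Forall_tag_ok_add_item_at P i x l :
  Forall tag_ok P -> nth i P (0, false) = (l, true) -> 1/3 < x ->
  Forall tag_ok (add_item_at P i x).
Proof.
  revert i; induction P as [|[a s] P IH]; intros [|i] HP Hn Hx; simpl in Hn;
    try discriminate; inversion_clear HP as [|? ? Ha HP']; simpl.
  - injection Hn as -> ->; constructor; [unfold tag_ok in *; simpl in *; lra | exact HP'].
  - constructor; eauto.
Qed.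

Variant tagged_step_spec (P : list (R * bool)) (x : R) : list (R * bool) -> Prop :=
  | TaggedOpen :
      (forall y, In y (singles P) -> 1 < y + x) ->
      tagged_step_spec P x (P ++ [(x, true)])
  | TaggedClose l P' :
      l + x <= 1 ->
      (forall y, In y (singles P) -> y + x <= 1 -> y <= l) ->
      Permutation (singles P) (l :: singles P') ->
      length P' = length P -> Forall tag_ok P' ->
      tagged_step_spec P x P'.

(** A bin holding two items has load above [2/3], so an item above [1/3] can
    only join a single-item bin. *)
Lemma tagged_stepP P x :
  Forall tag_ok P -> 1/3 < x -> tagged_step_spec P x (tagged_step P x).
Proof.
  intros HP Hx.
  assert (Hin : forall y, In y (singles P) -> In y (map fst P))
    by (intros y Hy; exact (in_map fst _ _ (in_singles P y Hy))).
  unfold tagged_step; destruct (best_bin (map fst P) x) as [i|] eqn:E.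
  - destruct (best_bin_some _ _ _ E) as [Hi [Hfit Hmax]].
    rewrite length_map in Hi.
    rewrite (map_nth fst P (0, false)) in Hfit, Hmax.
    destruct (nth i P (0, false)) as [l s] eqn:Hn; simpl in Hfit, Hmax.
    assert (Hok : tag_ok (l, s)).
    { rewrite <- Hn; exact (proj1 (Forall_forall _ _) HP _ (nth_In P _ Hi)). }
    destruct s; unfold tag_ok in Hok; simpl in Hok; [|lra].
    apply (TaggedClose P x l).
    + exact Hfit.
    + intros y Hy; apply Hmax, Hin, Hy.
    + apply singles_add_item_at, Hn.
    + apply length_add_item_at.
    + exact (Forall_tag_ok_add_item_at P i x l HP Hn Hx).
  - apply TaggedOpen; intros y Hy; exact (best_bin_none _ _ E y (Hin y Hy)).
Qed.

Definition incompatible (a b : R) : Prop := 1 < a + b.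

Lemma incompatible_sym a b : incompatible a b -> incompatible b a.
Proof. unfold incompatible; lra. Qed.

(** Each bin holds one or two items, [n] of them in total. *)
Definition bf_inv (n : nat) (P : list (R * bool)) : Prop :=
  Forall tag_ok P /\ ForallOrdPairs incompatible (singles P) /\
  (2 * length P = n + length (singles P))%nat.

Lemma bf_inv_step n P x : bf_inv n P -> 1/3 < x -> bf_inv (S n) (tagged_step P x).
Proof.
  intros [HF [Hinc Hcount]] Hx; unfold bf_inv.
  destruct (tagged_stepP P x HF Hx) as [Hopen | l P' _ _ HP Hlen HF'].
  - rewrite singles_snoc; repeat split.
    + apply Forall_app; split; [exact HF | constructor; [exact Hx | constructor]].
    + apply ForallOrdPairs_snoc; [exact Hinc|].
      apply Forall_forall; exact Hopen.
    + rewrite !length_app; simpl; lia.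
  - assert (Hinc' := ForallOrdPairs_perm _ _ incompatible_sym _ _ HP Hinc).
    inversion_clear Hinc' as [|? ? _ Hinc''].
    assert (Hs := Permutation_length HP); simpl in Hs.
    repeat split; auto; lia.
Qed.

Lemma dominates_step n P P' x x' :
  bf_inv n P -> bf_inv n P' -> dominates (singles P) (singles P') ->
  1/3 < x -> x <= x' ->
  dominates (singles (tagged_step P x)) (singles (tagged_step P' x')).
Proof.
  intros [HF [_ Hcount]] [HF' [Hinc' Hcount']] HD Hx Hxx.
  destruct (tagged_stepP P x HF Hx) as [Hopen | l Q _ Hmax HP _ _];
  destruct (tagged_stepP P' x' HF' ltac:(lra)) as [Hopen' | l' Q' Hfit' _ HP' _ _].
  - rewrite !singles_snoc; exact (dominates_snoc _ _ _ _ HD Hxx).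
  - rewrite singles_snoc.
    assert (Hgt : forall y, In y (singles P) -> l' < y)
      by (intros y Hy; specialize (Hopen y Hy); lra).
    assert (Hge : forall y, In y (singles Q') -> x <= y).
    { apply ForallOrdPairs_perm with (1 := incompatible_sym) (2 := HP') in Hinc'.
      inversion_clear Hinc' as [|? ? Hl' _].
      intros y Hy; assert (H := proj1 (Forall_forall _ _) Hl' y Hy).
      unfold incompatible in H; lra. }
    assert (Hle := dominates_length l' _ _ (dominates_remove_below _ _ _ _ HD HP' Hgt) Hgt).
    assert (Hs := Permutation_length HP'); simpl in Hs.
    apply (dominates_open_close _ _ _ _ _ HD HP' Hgt Hge); lia.
  - rewrite singles_snoc; apply dominates_snoc_r; exact (dominates_remove_l _ _ _ _ HD HP).
  - apply (dominates_remove_pair _ _ _ _ _ _ (1 - x) HD HP HP').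
    + intros y Hy Hyx; apply Hmax; [exact Hy | lra].
    + lra.
Qed.

Definition bf_sim (n : nat) (P P' : list (R * bool)) : Prop :=
  bf_inv n P /\ bf_inv n P' /\ dominates (singles P) (singles P').

Lemma bf_sim_step n P P' x x' :
  bf_sim n P P' -> 1/3 < x -> x <= x' ->
  bf_sim (S n) (tagged_step P x) (tagged_step P' x').
Proof.
  intros [Hinv [Hinv' HD]] Hx Hxx; split; [|split].
  - exact (bf_inv_step n P x Hinv Hx).
  - apply (bf_inv_step n P' x' Hinv'); lra.
  - exact (dominates_step n P P' x x' Hinv Hinv' HD Hx Hxx).
Qed.

Lemma bf_sim_fold I I' n P P' :
  length I = length I' -> (forall x, In x I -> 1/3 < x) ->
  (forall i, (i < length I)%nat -> nth i I 0 <= nth i I' 0) ->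
  bf_sim n P P' ->
  bf_sim (n + length I) (fold_left tagged_step I P) (fold_left tagged_step I' P').
Proof.
  revert I' n P P'; induction I as [|x I IH]; intros [|x' I'] n P P' Hlen Hx Hle Hsim;
    simpl in Hlen |- *; try discriminate; [rewrite Nat.add_0_r; exact Hsim|].
  rewrite <- Nat.add_succ_comm.
  apply IH; auto with datatypes.
  - intros i Hi; apply (Hle (S i)); simpl; lia.
  - apply bf_sim_step; [exact Hsim | auto with datatypes | apply (Hle 0%nat); simpl; lia].
Qed.

Theorem proposition7 (I I' : list R) :
  length I = length I' ->
  (forall x, In x I -> 1/3 < x <= 1) ->
  (forall x, In x I' -> 0 < x <= 1) ->
  (forall i, (i < length I)%nat -> nth i I 0 <= nth i I' 0) ->
  (BF I <= BF I')%nat.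
Proof.
  intros Hlen HI _ Hle.
  assert (Hsim : bf_sim (0 + length I) (fold_left tagged_step I [])
                                       (fold_left tagged_step I' [])).
  { apply bf_sim_fold; auto.
    - intros x Hx; apply HI, Hx.
    - repeat split; try constructor; intros t; apply le_n. }
  destruct Hsim as [[HF [_ Hcount]] [[_ [_ Hcount']] HD]].
  assert (Hs := dominates_length (1/3) _ _ HD (fun y => singles_gt _ y HF)).
  unfold BF, bf_loads.
  change (@nil R) with (map fst (@nil (R * bool))).
  rewrite <- !map_fst_fold_tagged_step, !length_map; lia.
Qed.
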